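(* For every integer $q\ge 11$ there exists an $\mathcal{SOS}_q(3)$ of period $\frac{q^3-6q^2+2q}{2}$ if $q\equiv 0\pmod 4$, $\frac{q^3-6q^2-q}{2}$ if $q\equiv 1\pmod 4$, $\frac{q^3-8q^2+6q}{2}$ if $q\equiv 2\pmod 4$, and $\frac{q^3-4q^2-3q}{2}$ if $q\equiv 3\pmod 4$.
   Context: For a periodic sequence $S=(s_i)$ over $\mathbb{Z}_q$ write $\mathbf{s}_n(i)=(s_i,\ldots,s_{i+n-1})$; $\mathbf{u}^R$ denotes the reverse of a tuple and $-\mathbf{u}$ its termwise negative. An $\mathcal{SOS}_q(n)$ is a periodic sequence of period $m$ over $\mathbb{Z}_q$ such that $\mathbf{s}_n(i)=\mathbf{s}_n(j)$ implies $i\equiv j\pmod m$, and $\mathbf{s}_n(i)\neq\mathbf{s}_n(j)^R$ and $\mathbf{s}_n(i)\neq-\mathbf{s}_n(j)^R$ for all $i,j$. *)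

From mathcomp Require Import all_boot all_algebra.
Set Implicit Arguments. Unset Strict Implicit. Unset Printing Implicit Defensive.
Import GRing.Theory.
Local Open Scope ring_scope.

Definition window (q : nat) (s : nat -> 'Z_q) (n i : nat) : {ffun 'I_n -> 'Z_q} :=
  [ffun k : 'I_n => s (i + k)%N].

Definition rev_tuple (q n : nat) (u : {ffun 'I_n -> 'Z_q}) : {ffun 'I_n -> 'Z_q} :=
  [ffun k : 'I_n => u (rev_ord k)].

Definition neg_tuple (q n : nat) (u : {ffun 'I_n -> 'Z_q}) : {ffun 'I_n -> 'Z_q} :=
  [ffun k : 'I_n => - u k].

Definition periodic (q : nat) (s : nat -> 'Z_q) (m : nat) : Prop :=
  (0 < m)%N /\ forall i, s (i + m)%N = s i.

Definition is_SOS (q n m : nat) (s : nat -> 'Z_q) : Prop :=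
  periodic s m /\
  (forall i j, window s n i = window s n j -> i = j %[mod m]) /\
  (forall i j, window s n i <> rev_tuple (window s n j)) /\
  (forall i j, window s n i <> neg_tuple (rev_tuple (window s n j))).

(* the period from Corollary 5.3; numerators are nonnegative integers for q >= 11 *)
Definition cor53_period (q : nat) : nat :=
  match (q %% 4)%N with
  | 0 => (q ^ 3 + 2 * q - 6 * q ^ 2) %/ 2
  | 1 => (q ^ 3 - 6 * q ^ 2 - q) %/ 2
  | 2 => (q ^ 3 + 6 * q - 8 * q ^ 2) %/ 2
  | _ => (q ^ 3 - 4 * q ^ 2 - 3 * q) %/ 2
  end%N.

(* Let s_p = w_0 + ... + w_(p-1) in Z_q be the running sum of a cyclic integer word w of
   length L with sum 1 and entries of absolute value below q/2.  The window of s at p is s_p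
   followed by the increments (w_p, w_(p+1)), which are recovered exactly from Z_q; so equal
   windows have equal difference pairs, hence positions equal mod L, and then positions equal
   mod qL, since each turn of w adds 1 to s.  Reversal maps the difference pair (a, b) of a
   window to (-b, -a), and negated reversal maps it to (b, a).  Hence s is an SOS_q(3) of
   period qL as soon as the cyclic difference pairs of w are distinct and no two of them (not
   necessarily distinct) are related by one of these two maps.
   With n = (q-1)/2 rounded down, such a word is a seed whose pairs have entries at most 3, followed for
   4 <= j <= n by a zero-sum layer cycling through (j,-i), (-i,-j), (-j,i), (i,j) for
   0 < i < j: pairs from different layers or from different i have different absolute values
   {j, i}, and the four pairs of one quadruple are not related to each other.  The top layer
   is cut short when n is even, and counting lengths gives the four period formulas. *)

From Pilot Require Import Defs.
From mathcomp Require Import all_boot all_algebra.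
From mathcomp Require Import zify ring.
Set Implicit Arguments. Unset Strict Implicit. Unset Printing Implicit Defensive.
Import GRing.Theory.

Section CyclicPairs.
Variable T : eqType.
Implicit Types (s t : seq T) (h : T).

Definition cpairs s := zip s (rot 1 s).

Lemma size_cpairs s : size (cpairs s) = size s.
Proof. by rewrite size1_zip // size_rot. Qed.

Lemma nth_cpairs x0 s r : r < size s ->
  nth (x0, x0) (cpairs s) r = (nth x0 s r, nth x0 s (r.+1 %% size s)).
Proof.
case: s => [|h s] //= lt_r; rewrite nth_zip ?size_rot // rot1_cons nth_rcons.
move: lt_r; rewrite ltnS leq_eqVlt => /predU1P [-> | lt_r].
  by rewrite ltnn eqxx modnn.
by rewrite lt_r modn_small.
Qed.

Lemma take_zip (S : Type) k s (u : seq S) : take k (zip s u) = zip (take k s) (take k u).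
Proof. by elim: s u k => [|x s IH] [|y u] [|k] //=; rewrite IH. Qed.

Lemma drop_zip (S : Type) k s (u : seq S) : drop k (zip s u) = zip (drop k s) (drop k u).
Proof. by elim: s u k => [|x s IH] [|y u] [|k] //=; case: drop. Qed.

Lemma rot_zip (S : Type) k s (u : seq S) : size s = size u ->
  rot k (zip s u) = zip (rot k s) (rot k u).
Proof. by move=> eq_su; rewrite /rot drop_zip take_zip zip_cat // !size_drop eq_su. Qed.

Lemma cpairs_rot k s : cpairs (rot k s) = rot k (cpairs s).
Proof. by rewrite /cpairs rot_zip ?size_rot // rot_rot. Qed.

Lemma cpairs_cat h s t : cpairs (h :: s ++ h :: t) = cpairs (h :: s) ++ cpairs (h :: t).
Proof.
rewrite /cpairs !rot1_cons.
have -> : rcons (s ++ h :: t) h = rcons s h ++ rcons t h by rewrite rcons_cat cat_rcons.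
by rewrite -cat_cons zip_cat // size_rcons.
Qed.

Lemma cpairs_flatten h (ss : seq (seq T)) : ss != [::] ->
  {in ss, forall s, ohead s = Some h} ->
  cpairs (flatten ss) = flatten (map cpairs ss).
Proof.
elim: ss => [|s ss IH] // _ heads.
have headE u : u \in s :: ss -> u = h :: behead u by move/heads; case: u => // _ u [->].
case: ss IH heads headE => [|s' ss] IH heads headE; first by rewrite /= !cats0.
have in_ss u : u \in s' :: ss -> u \in s :: s' :: ss by move=> u_in; rewrite inE u_in orbT.
rewrite [flatten _]/= [in LHS](headE s) ?mem_head // [in LHS](headE s') ?in_ss ?mem_head //.
rewrite cpairs_cat -headE ?mem_head // -cat_cons -headE ?in_ss ?mem_head //.
by rewrite IH // => u /in_ss /heads.
Qed.
End CyclicPairs.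

Section RelFree.
Variables (T : eqType) (r : rel T).
Implicit Types s t : seq T.

Definition rel_free s := uniq s && all2rel (fun x y => ~~ r x y) s.

Lemma perm_rel_free s t : perm_eq s t -> rel_free s = rel_free t.
Proof.
by move=> st; rewrite /rel_free (perm_uniq st) (eq_allrel_mem2 _ (perm_mem st) (perm_mem st)).
Qed.

Variables (K : eqType) (key : T -> K).
Hypothesis r_key : forall x y, r x y -> key x = key y.

Lemma rel_free_cat s t : rel_free s -> rel_free t ->
  {in s & t, forall x y, key x != key y} -> rel_free (s ++ t).
Proof.
move=> /andP [uniq_s free_s] /andP [uniq_t free_t] key_st.
have r_st x y : x \in s -> y \in t -> ~~ r x y && ~~ r y x.
  move=> xs yt; have := key_st x y xs yt.
  by apply: contraNT => /nandP [] /negPn /r_key ->.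
rewrite /rel_free cat_uniq allrel_catl !allrel_catr uniq_s uniq_t free_s free_t /= !andbT.
apply/and3P; split.
- by apply/hasPn => y yt; apply/negP => ys; have := key_st y y ys yt; rewrite eqxx.
- by apply/allrelP => x y xs yt; case/andP: (r_st x y xs yt).
- by apply/allrelP => y x yt xs; case/andP: (r_st x y xs yt).
Qed.

Lemma rel_free_flatten (f : K -> seq T) (ks : seq K) : uniq ks ->
  {in ks, forall k, rel_free (f k)} -> {in ks, forall k, {in f k, forall x, key x = k}} ->
  rel_free (flatten (map f ks)).
Proof.
elim: ks => [|k ks IH] //= /andP [k_ks uniq_ks] free_f key_f.
apply: rel_free_cat; first exact/free_f/mem_head.
- by apply: IH => // [l l_ks | l l_ks]; [apply: free_f | apply: key_f]; rewrite inE l_ks orbT.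
move=> x y xk /flatten_mapP [l l_ks yl].
rewrite (key_f k) ?mem_head // (key_f l) ?inE ?l_ks ?orbT //.
by apply: contraNneq k_ks => ->.
Qed.
End RelFree.

Local Open Scope ring_scope.

Definition mirrored (V : zmodType) (x y : V * V) := (y == (x.2, x.1)) || (y == (- x.2, - x.1)).

Section WindowDifferences.
Variable q : nat.
Implicit Types (s : nat -> 'Z_q) (u : {ffun 'I_3 -> 'Z_q}).

Definition wdiffs u := (u (inord 1) - u (inord 0), u (inord 2) - u (inord 1)).

Lemma wdiffs_window s i : wdiffs (window s 3 i) = (s i.+1 - s i, s i.+2 - s i.+1).
Proof. by rewrite /wdiffs !ffunE !inordK // addn0 addn1 addn2. Qed.

Lemma wdiffs_rev u : wdiffs (Defs.rev_tuple u) = (- (wdiffs u).2, - (wdiffs u).1).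
Proof.
have rev_inord k : (k < 3)%N -> rev_ord (inord k) = inord (2 - k) :> 'I_3.
  by move=> lt_k3; apply: val_inj; rewrite /= !inordK //; case: k lt_k3 => [|[|[|]]].
by rewrite /wdiffs !ffunE !rev_inord // !opprB.
Qed.

Lemma wdiffs_neg u : wdiffs (neg_tuple u) = (- (wdiffs u).1, - (wdiffs u).2).
Proof. by rewrite /wdiffs !ffunE; congr (_, _); rewrite opprK opprB addrC. Qed.

Lemma wdiffs_neg_rev u : wdiffs (neg_tuple (Defs.rev_tuple u)) = ((wdiffs u).2, (wdiffs u).1).
Proof. by rewrite wdiffs_neg wdiffs_rev /= !opprK. Qed.
End WindowDifferences.

Section IntrZp.
Variable q : nat.
Hypothesis q_gt1 : (1 < q)%N.

Lemma intr_Zp_eq0 (z : int) : (`|z| < q)%N -> (z%:~R == 0 :> 'Z_q) = (z == 0).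
Proof.
have natr_eq0 k : (k < q)%N -> (k%:R == 0 :> 'Z_q) = (k == 0%N).
  by move=> lt_kq; rewrite -(inj_eq val_inj) /= val_Zp_nat // modn_small.
case: z => k lt_kq; first by rewrite -pmulrn natr_eq0.
by rewrite NegzE intrN oppr_eq0 -pmulrn natr_eq0.
Qed.

Definition small_int (z : int) := (2 * `|z| < q)%N.
Definition small_pair (x : int * int) := small_int x.1 && small_int x.2.
Definition intr_pair (x : int * int) : 'Z_q * 'Z_q := (x.1%:~R, x.2%:~R).

Lemma intr_Zp_inj x y : small_int x -> small_int y -> x%:~R = y%:~R :> 'Z_q -> x = y.
Proof.
move=> small_x small_y eq_xy; apply/eqP; rewrite -subr_eq0 -(intr_Zp_eq0 (z := x - y)).
  by rewrite intrB eq_xy subrr.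
rewrite /small_int in small_x small_y; lia.
Qed.

Lemma intr_pair_inj x y : small_pair x -> small_pair y -> intr_pair x = intr_pair y -> x = y.
Proof.
case: x y => [x1 x2] [y1 y2] /andP [sx1 sx2] /andP [sy1 sy2] [e1 e2].
by congr pair; apply: intr_Zp_inj.
Qed.

Lemma mirrored_intr_pair x y : small_pair x -> small_pair y ->
  mirrored (intr_pair x) (intr_pair y) -> mirrored x y.
Proof.
have small_oppr z : small_int (- z) = small_int z by rewrite /small_int abszN.
case: x => [x1 x2] /andP [sx1 sx2] small_y; rewrite /mirrored /=.
case/orP => /eqP e; apply/orP; [left | right]; apply/eqP/intr_pair_inj => //.
- by rewrite /small_pair sx1 sx2.
- by rewrite /small_pair !small_oppr sx1 sx2.
- by rewrite e /intr_pair /= !intrN.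
Qed.
End IntrZp.

Section DifferenceSequence.
Variables (q : nat) (w : seq int).
Hypotheses (q_gt1 : (1 < q)%N) (sum_w : \sum_(x <- w) x = 1).
Hypotheses (small_w : {in w, forall x, small_int q x}) (free_w : rel_free (@mirrored _) (cpairs w)).

Local Notation L := (size w).

Definition step (p : nat) := nth 0 w (p %% L).
Definition step_pair (p : nat) := (step p, step p.+1).
Definition psum (p : nat) : 'Z_q := \sum_(t < p) (step t)%:~R.

Let size_gt0 : (0 < L)%N.
Proof. by case: w sum_w; rewrite ?big_nil. Qed.

Lemma psumS p : psum p.+1 = psum p + (step p)%:~R.
Proof. by rewrite /psum big_ord_recr. Qed.

Lemma psum_size : psum L = 1.
Proof.
rewrite /psum (eq_bigr (fun t : 'I_L => (nth 0 w t)%:~R)) => [|t _]; last first.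
  by rewrite /step modn_small.
rewrite -(big_mkord xpredT (fun t => (nth 0 w t)%:~R)).
by rewrite -(big_nth 0 xpredT (fun x => x%:~R)) -rmorph_sum sum_w.
Qed.

Lemma psum_addL p : psum (p + L) = psum p + 1.
Proof.
elim: p => [|p IH]; first by rewrite psum_size /psum big_ord0 add0r.
by rewrite addSn !psumS IH /step modnDr addrAC.
Qed.

Lemma psumD p d : psum (p + d * L) = psum p + d%:R.
Proof.
elim: d => [|d IH]; first by rewrite addn0 addr0.
by rewrite mulSn addnCA addnC psum_addL IH mulrSr addrA.
Qed.

Lemma step_pairE p : step_pair p = nth (0, 0) (cpairs w) (p %% L).
Proof. by rewrite nth_cpairs ?ltn_pmod // -addn1 modnDml addn1. Qed.

Lemma step_pair_in p : step_pair p \in cpairs w.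
Proof. by rewrite step_pairE mem_nth // size_cpairs ltn_pmod. Qed.

Lemma small_step_pair p : small_pair q (step_pair p).
Proof. by apply/andP; split; apply/small_w/mem_nth/ltn_pmod. Qed.

Lemma step_pair_inj i j : step_pair i = step_pair j -> i = j %[mod L].
Proof.
case/andP: free_w => uniq_w _.
by rewrite !step_pairE => /eqP; rewrite nth_uniq ?size_cpairs ?ltn_pmod // => /eqP.
Qed.

Lemma step_pair_not_mirrored i j : ~~ mirrored (step_pair i) (step_pair j).
Proof. by case/andP: free_w => _ /allrelP; apply; apply: step_pair_in. Qed.

Lemma wdiffs_psum i : wdiffs (window psum 3 i) = intr_pair q (step_pair i).
Proof. by rewrite wdiffs_window !psumS; congr pair; rewrite addrAC subrr add0r. Qed.

Lemma psum_eq_mod i j : i = j %[mod L] -> psum i = psum j -> i = j %[mod q * L].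
Proof.
wlog le_ij : i j / (i <= j)%N.
  move=> wlog_ij; have [/wlog_ij // | /ltnW le_ji eq_mod eq_psum] := leqP i j.
  by apply/esym/wlog_ij.
move=> /eqP; rewrite eq_sym eqn_mod_dvd // => /dvdnP [d def_d].
have -> : j = (i + d * L)%N by rewrite -def_d subnKC.
rewrite psumD -{1}[psum i]addr0 => /addrI /eqP.
rewrite eq_sym -(inj_eq val_inj) /= val_Zp_nat // -/(dvdn q d) => /dvdnP [e ->].
by rewrite -mulnA addnC modnMDl.
Qed.

Lemma window_diffs_not_mirrored i j :
  ~~ mirrored (wdiffs (window psum 3 j)) (wdiffs (window psum 3 i)).
Proof.
rewrite !wdiffs_psum; apply: contra (step_pair_not_mirrored j i).
exact: mirrored_intr_pair (small_step_pair j) (small_step_pair i).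
Qed.

Lemma psum_SOS : is_SOS 3 (q * L) psum.
Proof.
split; [split | split; [| split]].
- by rewrite muln_gt0 size_gt0 andbT ltnW.
- by move=> i; rewrite psumD pchar_Zp // addr0.
- move=> i j eq_ij; apply: psum_eq_mod.
    apply/step_pair_inj/(intr_pair_inj q_gt1); rewrite ?small_step_pair //.
    by rewrite -!wdiffs_psum eq_ij.
  by have := congr1 (fun u : {ffun _} => u ord0) eq_ij; rewrite !ffunE !addn0.
- move=> i j eq_ij; have := window_diffs_not_mirrored i j.
  by rewrite eq_ij wdiffs_rev /mirrored eqxx orbT.
- move=> i j eq_ij; have := window_diffs_not_mirrored i j.
  by rewrite eq_ij wdiffs_neg_rev /mirrored eqxx.
Qed.

End DifferenceSequence.

Definition seed : seq int := [:: 1; 0; 2; 1; -2; 3; -1; 0; -3].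
Definition quad (j i : nat) : seq int := [:: j%:Z; - i%:Z; - j%:Z; i%:Z].
Definition layer (j k : nat) : seq int := rot 3 (flatten [seq quad j i | i <- iota 1 k]).
Definition layer_len (n j : nat) : nat := if (j == n) && ~~ odd n then n./2.-1 else j.-1.
Definition sos_word (n : nat) : seq int :=
  seed ++ flatten [seq layer j (layer_len n j) | j <- iota 4 (n - 3)].

Definition pair_key (x : int * int) := (maxn `|x.1| `|x.2|, minn `|x.1| `|x.2|).

Lemma mirrored_pair_key x y : mirrored x y -> pair_key x = pair_key y.
Proof. by case/orP => /eqP ->; rewrite /pair_key /= ?abszN maxnC minnC. Qed.

Lemma ohead_layer j k : (0 < k)%N -> ohead (layer j k) = Some 1.
Proof. by case: k. Qed.

Lemma cpairs_quad j i :
  cpairs (quad j i) = [:: (j%:Z, - i%:Z); (- i%:Z, - j%:Z); (- j%:Z, i%:Z); (i%:Z, j%:Z)].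
Proof. by []. Qed.

Lemma pair_key_quad j i x : (i < j)%N -> x \in cpairs (quad j i) -> pair_key x = (j, i).
Proof.
move=> lt_ij; rewrite cpairs_quad !inE /pair_key.
have le_ij := ltnW lt_ij.
by case/or4P => /eqP -> /=; rewrite ?abszN /= ?(maxn_idPl le_ij) ?(maxn_idPr le_ij)
  ?(minn_idPl le_ij) ?(minn_idPr le_ij).
Qed.

Lemma rel_free_quad j i : (0 < i < j)%N -> rel_free (@mirrored _) (cpairs (quad j i)).
Proof.
case/andP=> i_gt0 lt_ij; apply/andP; split.
  by rewrite cpairs_quad /= !inE !xpair_eqE /= -!eqr_oppLR !eqz_nat; lia.
apply/allrelP => x y; rewrite cpairs_quad !inE /mirrored.
by case/or4P => /eqP -> /or4P [] /eqP -> /=; rewrite !xpair_eqE /= ?opprK -?eqr_oppLR ?eqz_nat; lia.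
Qed.

Lemma cpairs_layer j k : (0 < k)%N ->
  perm_eq (cpairs (layer j k)) (flatten [seq cpairs (quad j i) | i <- iota 1 k]).
Proof.
move=> k_gt0; rewrite cpairs_rot perm_rot (cpairs_flatten (h := j%:Z)) -?map_comp.
- exact: perm_refl.
- by case: k k_gt0.
- by move=> _ /mapP [i _ ->].
Qed.

Lemma mem_layer j k x : x \in layer j k -> exists2 i, (0 < i <= k)%N & x \in quad j i.
Proof.
rewrite mem_rot => /flatten_mapP [i]; rewrite mem_iota => /andP [i_gt0 i_le] x_in.
by exists i => //; lia.
Qed.

Lemma rel_free_layer j k : (k < j)%N -> rel_free (@mirrored _) (cpairs (layer j k)).
Proof.
case: k => [|k] lt_kj; first by [].
rewrite (perm_rel_free _ (cpairs_layer _ _)) //.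
apply: (rel_free_flatten (key := fun x => (pair_key x).2)) => [x y /mirrored_pair_key -> //| | i | i].
- exact: iota_uniq.
- by rewrite mem_iota => /andP [i_gt0 lt_i]; apply: rel_free_quad; rewrite i_gt0; lia.
- by rewrite mem_iota => /andP [_ lt_i] x x_in; rewrite (pair_key_quad _ x_in) //; lia.
Qed.

Lemma pair_key_layer j k x : (k < j)%N -> x \in cpairs (layer j k) -> (pair_key x).1 = j.
Proof.
case: k => [|k] // lt_kj; rewrite (perm_mem (cpairs_layer _ _)) //.
case/flatten_mapP => i; rewrite mem_iota => /andP [_ lt_i] x_in.
by rewrite (pair_key_quad _ x_in) //; lia.
Qed.

Lemma layer_len_bounds n j : (4 <= j)%N -> (0 < layer_len n j < j)%N.
Proof. by rewrite /layer_len; case: ifP => [/andP [/eqP -> _] | _]; lia. Qed.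

Lemma cpairs_sos_word n : cpairs (sos_word n) =
  cpairs seed ++ flatten [seq cpairs (layer j (layer_len n j)) | j <- iota 4 (n - 3)].
Proof.
rewrite -[sos_word n]/(flatten (seed :: _)) (cpairs_flatten (h := 1)) // => [|s].
  by rewrite /= -map_comp.
rewrite inE => /predU1P [-> // | /mapP [j]].
by rewrite mem_iota => /andP [le_4j _] ->; apply/ohead_layer; case/andP: (layer_len_bounds n le_4j).
Qed.

Lemma rel_free_sos_word n : rel_free (@mirrored _) (cpairs (sos_word n)).
Proof.
have key_mirrored x y : mirrored x y -> (pair_key x).1 = (pair_key y).1.
  by move/mirrored_pair_key ->.
rewrite cpairs_sos_word; apply: (rel_free_cat key_mirrored); first by [].
- apply: (rel_free_flatten key_mirrored) => [|j|j]; first exact: iota_uniq.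
    by rewrite mem_iota => /andP [le_4j _]; apply/rel_free_layer; case/andP: (layer_len_bounds n le_4j).
  by rewrite mem_iota => /andP [le_4j _] x /=; apply/pair_key_layer; case/andP: (layer_len_bounds n le_4j).
- move=> x y x_seed /flatten_mapP [j]; rewrite mem_iota => /andP [le_4j _] y_in.
  have seed_key : ((pair_key x).1 <= 3)%N by move: x x_seed; apply/allP.
  case/andP: (layer_len_bounds n le_4j) => _ /pair_key_layer/(_ y_in) key_y.
  by apply/eqP => eq_key; move: seed_key; rewrite eq_key key_y leqNgt le_4j.
Qed.

Lemma sos_word_bound n x : (3 <= n)%N -> x \in sos_word n -> (`|x| <= n)%N.
Proof.
move=> le_3n; rewrite mem_cat => /orP [x_seed | /flatten_mapP [j]].
  by apply: leq_trans le_3n; move: x x_seed; apply/allP.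
rewrite mem_iota => /andP [le_4j lt_jn] /mem_layer [i /andP [_ le_i]].
case/andP: (layer_len_bounds n le_4j) => _ lt_len.
by rewrite !inE => /or4P [] /eqP ->; rewrite ?abszN /=; lia.
Qed.

Lemma sum_layer j k : \sum_(x <- layer j k) x = 0.
Proof.
have perm_layer : perm_eq (layer j k) (flatten [seq quad j i | i <- iota 1 k]) by rewrite perm_rot.
rewrite (perm_big _ perm_layer) big_flatten big_map big1_seq // => i _.
by rewrite /quad !big_cons big_nil /=; ring.
Qed.

Lemma sum_sos_word n : \sum_(x <- sos_word n) x = 1.
Proof.
rewrite big_cat /= big_flatten big_map [X in _ + X]big1_seq ?addr0 => [|j _]; last exact: sum_layer.
by rewrite /seed !big_cons big_nil.
Qed.

Lemma size_layer j k : size (layer j k) = (4 * k)%N.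
Proof.
rewrite size_rot; elim: k => // k IH.
by rewrite -[k.+1]addn1 iotaD map_cat flatten_cat size_cat IH /=; lia.
Qed.

Lemma sum_pred_iota m : (2 * \sum_(j <- iota 4 m) j.-1 + 6 = (m + 3) * (m + 2))%N.
Proof.
elim: m => [|m IH]; first by rewrite big_nil.
rewrite -[m.+1]addn1 iotaD big_cat big_seq1 /=; lia.
Qed.

Lemma sum_layer_len n : (4 <= n)%N ->
  (\sum_(j <- iota 4 (n - 3)) layer_len n j + (if odd n then 0 else n./2) =
   \sum_(j <- iota 4 (n - 3)) j.-1)%N.
Proof.
move=> le_4n; have n_in : n \in iota 4 (n - 3) by rewrite mem_iota; lia.
rewrite !(bigD1_seq n) ?iota_uniq //= -addnAC.
rewrite (eq_bigr (fun j => j.-1)) => [|j /negbTE]; last by rewrite /layer_len => ->.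
congr (_ + _)%N; rewrite /layer_len eqxx /=.
by case: (boolP (odd n)) => odd_n /=; lia.
Qed.

Lemma size_sos_word n : (4 <= n)%N ->
  (size (sos_word n) + 3 + (if odd n then 2 else 4) * n = 2 * n ^ 2)%N.
Proof.
move=> le_4n; rewrite size_cat size_flatten /shape -map_comp sumnE big_map.
rewrite (eq_bigr (fun j => 4 * layer_len n j)%N) => [|j _]; last exact: size_layer.
rewrite -big_distrr /=; have := sum_layer_len le_4n; have := sum_pred_iota (n - 3).
set S := \sum_(j <- _) j.-1; set S' := \sum_(j <- _) layer_len n j; clearbody S S'.
by case: (boolP (odd n)) => odd_n /=; nia.
Qed.

Lemma cor53_periodE q : (11 <= q)%N -> cor53_period q = (q * size (sos_word q.-1./2))%N.
Proof.
move=> le_11q; set n := q.-1./2.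
have n_ge4 : (4 <= n)%N by rewrite /n; lia.
have := size_sos_word n_ge4; set L := size _ => size_L.
rewrite /cor53_period; case r_eq : (q %% 4)%N => [|[|[|[|r]]]]; last by lia.
- have [-> odd_n] : q = (2 * n + 2)%N /\ odd n by lia.
  by rewrite odd_n in size_L; clearbody n L; clear -size_L; nia.
- have [-> even_n] : q = (2 * n + 1)%N /\ ~~ odd n by lia.
  by rewrite (negbTE even_n) in size_L; clearbody n L; clear -size_L; nia.
- have [-> even_n] : q = (2 * n + 2)%N /\ ~~ odd n by lia.
  by rewrite (negbTE even_n) in size_L; clearbody n L; clear -size_L; nia.
- have [-> odd_n] : q = (2 * n + 1)%N /\ odd n by lia.
  by rewrite odd_n in size_L; clearbody n L; clear -size_L; nia.
Qed.

Theorem corollary5p3 (q : nat) : (11 <= q)%N ->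
  exists s : nat -> 'Z_q, is_SOS 3 (cor53_period q) s.
Proof.
move=> le_11q; rewrite cor53_periodE //; exists (psum q (sos_word q.-1./2)).
apply: psum_SOS; [lia | exact: sum_sos_word | | exact: rel_free_sos_word].
by move=> x /sos_word_bound; rewrite /small_int; lia.
Qed.
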